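(* The category $\mathbf{AlgLPries}$ of algebraic L-spaces and coherent L-morphisms is equivalent to the category $\mathbf{KBSob}$ of compactly based sober spaces and coherent maps.
   Context: A Priestley space is a Stone space $X$ with a partial order such that clopen upsets separate points. An L-space is a Priestley space in which the downset of each clopen set is clopen and the closure of each open upset is open. ${\sf ClopUp}(X)$ is the set of clopen upsets; $\mathrm{cl}$ denotes closure. An L-morphism is a continuous order-preserving map $f:X\to X'$ between L-spaces with $f^{-1}(\mathrm{cl}\,U)=\mathrm{cl}\,f^{-1}(U)$ for every open upset $U$ of $X'$. The spatial part of $X$ is $Y=\{y\in X\mid{\downarrow}y\text{ clopen}\}$. A Scott upset is a closed upset $F$ with $\min F\subseteq Y$; ${\sf ClopSUp}(X)$ is the set of clopen Scott upsets; $\mathrm{core}\,U=\bigcup\{V\in{\sf ClopSUp}(X)\mid V\subseteq U\}$. $X$ is an algebraic L-space if $\mathrm{core}\,U$ is dense in $U$ for each $U\in{\sf ClopUp}(X)$. An L-morphism $f:X_1\to X_2$ is coherent if $f^{-1}(\mathrm{core}\,U)\subseteq\mathrm{core}\,f^{-1}(U)$ for all $U\in{\sf ClopUp}(X_2)$. A topological space is compactly based if it has a basis of compact open sets; sober if every irreducible closed set is the closure of a unique point. A continuous map is coherent if preimages of compact open sets are compact. *)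

From HB Require Import structures.
From mathcomp Require Import all_boot all_order.
From mathcomp Require Import all_classical all_reals all_analysis.

Set Implicit Arguments.
Unset Strict Implicit.
Unset Printing Implicit Defensive.

Local Open Scope classical_set_scope.

(* Identities and
   composition are the usual ones on functions; equality of morphisms is
   equality of underlying functions. *)
Record ConcreteCat := {
  cc_ob : Type;
  cc_car : cc_ob -> Type;
  cc_hom : forall A B : cc_ob, (cc_car A -> cc_car B) -> Prop }.

Record Functor (C D : ConcreteCat) := {
  F_ob : cc_ob C -> cc_ob D;
  F_mor : forall (A B : cc_ob C) (f : cc_car A -> cc_car B),
      cc_hom f -> cc_car (F_ob A) -> cc_car (F_ob B);
  F_mor_hom : forall A B (f : cc_car A -> cc_car B) (p : cc_hom f),
      cc_hom (F_mor p);
  F_id : forall A (p : cc_hom (@id (cc_car A))), F_mor p = id;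
  F_comp : forall A B E (f : cc_car A -> cc_car B) (g : cc_car B -> cc_car E)
      (p : cc_hom f) (q : cc_hom g) (r : cc_hom (g \o f)),
      F_mor r = F_mor q \o F_mor p }.

Definition nat_iso_to_id (C D : ConcreteCat) (F : Functor C D)
    (G : Functor D C) : Prop :=
  exists eta : forall A : cc_ob C, cc_car (F_ob G (F_ob F A)) -> cc_car A,
  exists eta' : forall A : cc_ob C, cc_car A -> cc_car (F_ob G (F_ob F A)),
    (forall A, cc_hom (eta A)) /\
    (forall A, cc_hom (eta' A)) /\
    (forall A, eta A \o eta' A = id /\ eta' A \o eta A = id) /\
    (forall A B (f : cc_car A -> cc_car B) (p : cc_hom f),
        f \o eta A = eta B \o @F_mor D C G _ _ _ (@F_mor_hom C D F _ _ _ p)).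

Definition cat_equivalent (C D : ConcreteCat) : Prop :=
  exists (F : Functor C D) (G : Functor D C),
    nat_iso_to_id F G /\ nat_iso_to_id G F.

Section OrderTop.
Context {T : topologicalType} (le : T -> T -> Prop).

Definition partial_order : Prop :=
  [/\ forall x, le x x,
      forall x y, le x y -> le y x -> x = y &
      forall x y z, le x y -> le y z -> le x z].

Definition is_upset (U : set T) : Prop :=
  forall x y, U x -> le x y -> U y.

Definition downset (A : set T) : set T :=
  [set x | exists2 a, A a & le x a].

Definition stone_space : Prop :=
  [/\ compact [set: T], hausdorff_space T & totally_disconnected [set: T]].

Definition priestley_space : Prop :=
  [/\ stone_space, partial_order &
      forall x y, ~ le x y ->
        exists U : set T, [/\ clopen U, is_upset U, U x & ~ U y]].

Definition L_space : Prop :=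
  [/\ priestley_space,
      forall A : set T, clopen A -> clopen (downset A) &
      forall U : set T, open U -> is_upset U -> open (closure U)].

Definition ClopUp (U : set T) : Prop := clopen U /\ is_upset U.

Definition spatial_part : set T := [set y | clopen (downset [set y])].

Definition minimals (F : set T) : set T :=
  [set x | F x /\ forall y, F y -> le y x -> y = x].

Definition scott_upset (F : set T) : Prop :=
  [/\ closed F, is_upset F & minimals F `<=` spatial_part].

Definition ClopSUp (V : set T) : Prop := clopen V /\ scott_upset V.

Definition core (U : set T) : set T :=
  \bigcup_(V in [set V | ClopSUp V /\ V `<=` U]) V.

(* core U is dense in U (in the subspace topology of U), i.e. U is
   contained in the closure of core U. *)
Definition algebraic_L_space : Prop :=
  L_space /\ forall U, ClopUp U -> U `<=` closure (core U).

End OrderTop.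

Definition L_morphism {X X' : topologicalType} (le : X -> X -> Prop)
    (le' : X' -> X' -> Prop) (f : X -> X') : Prop :=
  [/\ continuous f,
      forall x y, le x y -> le' (f x) (f y) &
      forall U : set X', open U -> is_upset le' U ->
        f @^-1` (closure U) = closure (f @^-1` U)].

Definition coherent_L_morphism {X X' : topologicalType} (le : X -> X -> Prop)
    (le' : X' -> X' -> Prop) (f : X -> X') : Prop :=
  L_morphism le le' f /\
  forall U : set X', ClopUp le' U ->
    f @^-1` (core le' U) `<=` core le (f @^-1` U).

Definition compactly_based (T : topologicalType) : Prop :=
  forall (O : set T) x, open O -> O x ->
    exists K : set T, [/\ open K, compact K, K x & K `<=` O].

Definition irreducible_closed {T : topologicalType} (C : set T) : Prop :=
  [/\ closed C, C !=set0 &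
      forall A B : set T, closed A -> closed B -> C `<=` A `|` B ->
        C `<=` A \/ C `<=` B].

Definition sober (T : topologicalType) : Prop :=
  forall C : set T, irreducible_closed C ->
    exists! x : T, C = closure [set x].

Definition coherent_map {X Y : topologicalType} (f : X -> Y) : Prop :=
  continuous f /\
  forall K : set Y, open K -> compact K -> compact (f @^-1` K).

Record AlgLSpace := {
  alg_space :> topologicalType;
  alg_le : alg_space -> alg_space -> Prop;
  alg_ax : algebraic_L_space alg_le }.

Definition AlgLPries : ConcreteCat :=
  {| cc_ob := AlgLSpace;
     cc_car := fun X => Topological.sort (alg_space X);
     cc_hom := fun X Y f => coherent_L_morphism (@alg_le X) (@alg_le Y) f |}.

Record KBSobSpace := {
  kb_space :> topologicalType;
  kb_ax : compactly_based kb_space /\ sober kb_space }.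

Definition KBSob : ConcreteCat :=
  {| cc_ob := KBSobSpace;
     cc_car := fun X => Topological.sort (kb_space X);
     cc_hom := fun X Y f => @coherent_map X Y f |}.

(* An algebraic L-space X goes to its spatial part Y, topologised by the
   traces of open upsets; a space Z goes to the prime filters of its frame of
   opens, ordered by inclusion, with the patch topology generated by the sets
   [phi V `\` phi W], where [phi V] is the set of prime filters containing V.
   Algebraicity makes every clopen upset of X the closure of the Scott upsets it
   contains, hence determined by its spatial points; so a point of X is the same
   as a prime filter of opens of Y, and X is recovered from Y. Sobriety makes the
   spatial prime filters of Z exactly the neighbourhood filters of points, so Z
   is recovered. The points needed along the way come from compactness of the
   Stone spaces, minimal elements of closed sets, and the prime filter theorem. *)

From HB Require Import structures.
From mathcomp Require Import all_boot all_order.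
From mathcomp Require Import all_classical all_reals all_analysis.
From Stdlib Require List.

Set Implicit Arguments.
Unset Strict Implicit.
Unset Printing Implicit Defensive.

Local Open Scope classical_set_scope.

(** * Finite subfamilies and compactness *)

Definition set_of_list (I : Type) (s : seq I) : set I := [set i | List.In i s].

Lemma set_of_list_nil (I : Type) : set_of_list ([::] : seq I) = set0.
Proof. by apply/seteqP; split => i. Qed.

Lemma set_of_list_cons (I : Type) (j : I) (s : seq I) :
  set_of_list (j :: s) = j |` set_of_list s.
Proof. by apply/seteqP; split => i [->|h]; [left|right|left|right]. Qed.

Lemma set_of_list_cat (I : Type) (s t : seq I) :
  set_of_list (s ++ t) = set_of_list s `|` set_of_list t.
Proof. by apply/seteqP; split => i /=; [exact: List.in_app_or|exact: List.in_or_app]. Qed.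

Section FiniteFamilies.
Context {T I : Type} (P : set (set T)) (f : I -> set T).

Lemma bigcap_list_closed (s : seq I) : P setT -> setI_closed P ->
  (forall i, set_of_list s i -> P (f i)) -> P (\bigcap_(i in set_of_list s) f i).
Proof.
move=> PT PI; elim: s => [|j s IH] Pf; first by rewrite set_of_list_nil bigcap_set0.
rewrite set_of_list_cons bigcap_setU1; apply: PI; first by apply: Pf; left.
by apply: IH => i si; apply: Pf; right.
Qed.

Lemma bigcup_list_closed (s : seq I) : P set0 -> setU_closed P ->
  (forall i, set_of_list s i -> P (f i)) -> P (\bigcup_(i in set_of_list s) f i).
Proof.
move=> P0 PU; elim: s => [|j s IH] Pf; first by rewrite set_of_list_nil bigcup_set0.
rewrite set_of_list_cons bigcup_setU1; apply: PU; first by apply: Pf; left.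
by apply: IH => i si; apply: Pf; right.
Qed.

End FiniteFamilies.

Section Compactness.
Context {T : topologicalType}.

Lemma open_locally (S : set T) :
  (forall z, S z -> exists Q, [/\ open Q, Q z & Q `<=` S]) -> open S.
Proof.
move=> H; rewrite openE => z /H [Q [oQ Qz QS]].
by apply: (filterS QS); apply: open_nbhs_nbhs.
Qed.

Lemma closureP_open (A : set T) x :
  closure A x <-> forall Q, open Q -> Q x -> A `&` Q !=set0.
Proof.
split; first by move=> clx Q oQ Qx; apply: clx; apply: open_nbhs_nbhs.
move=> H B; rewrite nbhsE => -[Q [oQ Qx] QB].
by have [y [Ay Qy]] := H Q oQ Qx; exists y; split => //; apply: QB.
Qed.

Lemma compact_fip (A : set T) (I : Type) (f : I -> set T) :
  compact A -> (forall i, closed (f i)) ->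
  (forall s, A `&` \bigcap_(i in set_of_list s) f i !=set0) ->
  exists2 x, A x & forall i, f i x.
Proof.
move=> cA cf ne.
pose F := [set B | exists s, A `&` \bigcap_(i in set_of_list s) f i `<=` B].
have FF : ProperFilter F.
  apply: Build_ProperFilter_ex; first by move=> B [s sB]; have [x /sB] := ne s; exists x.
  split; first by exists [::].
  - move=> B C [s sB] [t tC]; exists (s ++ t); rewrite set_of_list_cat bigcap_setU.
    by move=> x [Ax [sx tx]]; split; [exact: sB|exact: tC].
  - by move=> B C BC [s sB]; exists s; exact: subset_trans BC.
have [p [Ap clp]] := cA F FF (ex_intro _ [::] (fun x => @proj1 _ _)).
exists p => // i; apply: (cf i) => B nB; apply: clp nB.
by exists [:: i] => x [_]; apply; left.
Qed.

Lemma compact_finite_subcover (A : set T) (I : Type) (g : I -> set T) :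
  compact A -> (forall i, open (g i)) -> A `<=` \bigcup_i g i ->
  exists s, A `<=` \bigcup_(i in set_of_list s) g i.
Proof.
move=> cA og cov; apply: contrapT => nsub.
have [x Ax nx] : exists2 x, A x & forall i, (~` g i) x.
  apply: compact_fip => // [i|s]; first by rewrite closedC.
  apply: contrapT => ne; apply: nsub; exists s => x Ax; apply: contrapT => nx.
  by apply: ne; exists x; split => // i si gi; apply: nx; exists i.
by have [i _] := cov x Ax; apply: nx.
Qed.

Lemma finite_subcover_compact (K : set T) :
  (forall (I : Type) (g : I -> set T), (forall i, open (g i)) ->
     K `<=` \bigcup_i g i -> exists s, K `<=` \bigcup_(i in set_of_list s) g i) ->
  compact K.
Proof.
move=> Hc F FF FK; apply: contrapT => ncl.
have Hk (k : {x | K x}) : exists QB : set T * set T,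
    [/\ open QB.1, QB.1 (sval k), F QB.2 & QB.1 `&` QB.2 = set0].
  apply: contrapT => nex; apply: ncl; exists (sval k); split; first exact: svalP.
  move=> B Q FB; rewrite nbhsE => -[Q' [oQ' Q'k] Q'Q].
  apply: contrapT => ne; apply: nex; exists (Q', B); split => //=.
  by apply/seteqP; split => // z [z1 z2]; apply: ne; exists z; split => //; apply: Q'Q.
pose QB k := sval (cid (Hk k)); have HQB k := svalP (cid (Hk k)).
have [|s Hs] := Hc _ (fun k => (QB k).1) (fun k => let: And4 o _ _ _ := HQB k in o).
  by move=> z Kz; exists (exist _ z Kz) => //; case: (HQB (exist _ z Kz)).
have FB : F (K `&` \bigcap_(k in set_of_list s) (QB k).2).
  apply: filterI => //; apply: bigcap_list_closed => [|B C|k _]; first exact: filterT.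
    exact: filterI.
  by case: (HQB k).
have [x [Kx Hx]] := filter_ex FB; have [k sk Qx] := Hs x Kx.
have [_ _ _ e] := HQB k.
have : ((QB k).1 `&` (QB k).2) x by split => //; apply: Hx.
by rewrite e.
Qed.

End Compactness.

(** * Priestley spaces *)

Section Upsets.
Context {T : topologicalType} (le : T -> T -> Prop).

Lemma upsetI : setI_closed (is_upset le).
Proof. by move=> U V uU uV x y [Ux Vx] xy; split; [exact: uU Ux xy|exact: uV Vx xy]. Qed.

Lemma upsetU : setU_closed (is_upset le).
Proof. by move=> U V uU uV x y [Ux|Vx] xy; [left; exact: uU Ux xy|right; exact: uV Vx xy]. Qed.

Lemma ClopUpT : ClopUp le [set: T]. Proof. by split; [exact: clopenT|]. Qed.
Lemma ClopUp0 : ClopUp le (set0 : set T). Proof. by split; [exact: clopen0|]. Qed.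

Lemma ClopUpI : setI_closed (ClopUp le).
Proof. by move=> U V [cU uU] [cV uV]; split; [exact: clopenI|exact: upsetI]. Qed.

Lemma ClopUpU : setU_closed (ClopUp le).
Proof. by move=> U V [cU uU] [cV uV]; split; [exact: clopenU|exact: upsetU]. Qed.

End Upsets.

Section Priestley.
Context {T : topologicalType} (le : T -> T -> Prop).
Hypothesis HP : priestley_space le.

Lemma pries_compact : compact [set: T]. Proof. by case: HP => -[]. Qed.
Lemma pries_refl x : le x x. Proof. by case: HP => _ []. Qed.
Lemma pries_anti x y : le x y -> le y x -> x = y.
Proof. by case: HP => _ [_ anti _] _; apply: anti. Qed.

Lemma pries_trans x y z : le x y -> le y z -> le x z.
Proof. by case: HP => _ [_ _ trans] _; apply: trans. Qed.

Lemma pries_sep x y : ~ le x y ->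
  exists U : set T, [/\ clopen U, is_upset le U, U x & ~ U y].
Proof. by case: HP => _ _; apply. Qed.

Lemma pries_closed_compact (A : set T) : closed A -> compact A.
Proof. by move=> cA; apply: subclosed_compact cA pries_compact _. Qed.

Lemma closed_downset1 a : closed (downset le [set a]).
Proof.
rewrite -[downset _ _]setCK closedC; apply: open_locally => z nz.
have [U [[oU _] uU Uz Ua]] : exists U : set T, [/\ clopen U, is_upset le U, U z & ~ U a].
  by apply: pries_sep => za; apply: nz; exists a.
by exists U; split => // w Uw [_ -> wa]; apply: Ua; exact: uU Uw wa.
Qed.

Lemma pries_clopen_sep x y : x <> y -> exists C : set T, [/\ clopen C, C x & ~ C y].
Proof.
move=> nxy; have [xy|nxy'] := pselect (le x y); last first.
  by have [U [cU _ Ux Uy]] := pries_sep nxy'; exists U.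
have [|U [cU _ Uy Ux]] := @pries_sep y x; first by move=> yx; apply: nxy; apply: pries_anti.
by exists (~` U); split => //; exact: clopenC.
Qed.

Lemma pries_clopen_nbhs (N : set T) y : open N -> N y ->
  exists C, [/\ clopen C, C y & C `<=` N].
Proof.
move=> oN Ny.
have Hsep (z : {z | ~ N z}) : exists C : set T, [/\ clopen C, C y & ~ C (sval z)].
  by apply: pries_clopen_sep => yz; apply: (svalP z); rewrite -yz.
pose C z := sval (cid (Hsep z)).
have HC z : [/\ clopen (C z), C z y & ~ C z (sval z)] := svalP (cid (Hsep z)).
have [|||s cov] := @compact_finite_subcover T (~` N) _ (fun z => ~` C z).
- by apply: pries_closed_compact; rewrite closedC.
- by move=> z; apply: closed_openC; case: (HC z) => -[].
- by move=> z nz; exists (exist _ z nz) => //; case: (HC (exist _ z nz)).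
exists (\bigcap_(z in set_of_list s) C z); split.
- by apply: bigcap_list_closed => [||z _]; [exact: clopenT|exact: clopenI|case: (HC z)].
- by move=> z _; case: (HC z).
- move=> x Cx; apply: contrapT => /cov [z sz]; apply; exact: Cx.
Qed.

Lemma chain_lower_bound (V A : set T) : closed V -> A !=set0 -> A `<=` V ->
  (forall a b, A a -> A b -> le a b \/ le b a) ->
  exists2 p, V p & forall a, A a -> le p a.
Proof.
move=> cV [a0 Aa0] AV totA.
have [|i|s|p Vp Hp] := @compact_fip T V {a | A a} (fun a => downset le [set sval a]).
- exact: pries_closed_compact.
- exact: closed_downset1.
- have [m Am Hm] : exists2 m, A m & forall a, set_of_list s a -> le m (sval a).
    elim: s => [|a s [m Am Hm]]; first by exists a0.
    have [ma|am] := totA _ _ Am (svalP a).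
      by exists m => // b [<-|sb]; [exact: ma|exact: Hm].
    exists (sval a); first exact: svalP.
    by move=> b [<-|sb]; [exact: pries_refl|exact: pries_trans am (Hm b sb)].
  by exists m; split; [exact: AV|move=> a sa; exists (sval a) => //; exact: Hm].
by exists p => // a Aa; have [_ -> pa] := Hp (exist _ a Aa).
Qed.

Lemma minimal_below (V : set T) x : closed V -> V x ->
  exists2 m, minimals le V m & le m x.
Proof.
move=> cV Vx.
pose R (s t : {y | V y /\ le y x}) := `[< le (sval t) (sval s) >].
have [||||t tmax] := @Zorn _ R.
- by move=> s; apply/asboolP; exact: pries_refl.
- by move=> r s t /asboolP rs /asboolP st; apply/asboolP; exact: pries_trans st rs.
- by move=> [s ?] [t ?] /asboolP st /asboolP ts; apply: eq_exist; exact: pries_anti.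
- move=> A totA; have [[a0 Aa0]|nA] := pselect (A !=set0); last first.
    exists (exist _ x (conj Vx (pries_refl x))) => s As; exfalso; apply: nA; by exists s.
  have [|||p Vp Hp] := @chain_lower_bound V (sval @` A) cV.
  - by exists (sval a0), a0.
  - by move=> _ [a _ <-]; case: (svalP a).
  - move=> _ _ [a Aa <-] [b Ab <-].
    by have [/asboolP|/asboolP] := totA _ _ Aa Ab; [right|left].
  have px : le p x by apply: pries_trans (Hp _ (imageP _ Aa0)) _; case: (svalP a0).
  by exists (exist _ p (conj Vp px)) => s As; apply/asboolP; apply: Hp; exists s.
- have [Vt tx] := svalP t; exists (sval t) => //; split => // y Vy yt.
  have yx : le y x by exact: pries_trans yt tx.
  by have /(_ (asboolT yt)) <- := tmax (exist _ y (conj Vy yx)).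
Qed.

(* The complement of a prime clopen upset is a principal downset: its top
   element lies in every clopen upset not contained in it, by compactness. *)
Lemma prime_ClopUp_downset1 (W : set T) : ClopUp le W -> ~` W !=set0 ->
  (forall W1 W2, ClopUp le W1 -> ClopUp le W2 -> W1 `&` W2 `<=` W ->
     W1 `<=` W \/ W2 `<=` W) ->
  exists x, downset le [set x] = ~` W.
Proof.
move=> [[oW _] uW] [y nWy] prime.
pose Q (A : set T) := ClopUp le A /\ ~ (A `<=` W).
have [|A|s|x nWx Qx] := @compact_fip T (~` W) {A | Q A} sval.
- by apply: pries_closed_compact; rewrite closedC.
- by case: (svalP A) => -[[]].
- have [_ nsub] : Q (\bigcap_(A in set_of_list s) sval A).
    apply: bigcap_list_closed => [|A B [cA nA] [cB nB]|A _]; rewrite /Q.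
    - by split; [exact: ClopUpT|move=> /(_ y I)].
    - split; first exact: ClopUpI.
      by move=> AB; have [] := prime _ _ cA cB AB.
    - exact: (svalP A).
  apply: contrapT => ne; apply: nsub => z Mz; apply: contrapT => nWz.
  by apply: ne; exists z.
exists x; apply/seteqP; split => [z [_ -> zx] Wz|z nWz]; first exact: nWx (uW _ _ Wz zx).
exists x => //; apply: contrapT => nzx.
have [U [cU uU Uz nUx]] := pries_sep nzx.
by apply: nUx; apply: (Qx (exist _ U _)); split => // UW; apply: nWz; apply: UW.
Qed.

End Priestley.

(** * L-spaces and algebraic L-spaces *)

Section LSpace.
Context {T : topologicalType} (le : T -> T -> Prop).
Hypothesis HL : L_space le.

Lemma L_pries : priestley_space le. Proof. by case: HL. Qed.

Lemma L_downset_clopen A : clopen A -> clopen (downset le A).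
Proof. by case: HL => _ + _; apply. Qed.

Lemma closure_upset U : is_upset le U -> is_upset le (closure U).
Proof.
move=> uU x y /closureP_open clx xy; apply/closureP_open => Q oQ Qy.
have [C [cC Cy CQ]] := pries_clopen_nbhs L_pries oQ Qy.
have [oD _] := L_downset_clopen cC.
have [u [Uu [c Cc uc]]] := clx _ oD (ex_intro2 _ _ y Cy xy).
by exists c; split; [exact: uU Uu uc|exact: CQ].
Qed.

Lemma ClopUp_closure U : open U -> is_upset le U -> ClopUp le (closure U).
Proof.
move=> oU uU; split; last exact: closure_upset.
by split; [case: HL => _ _; apply|exact: closed_closure].
Qed.

Lemma spatial_closure_upset y U :
  spatial_part le y -> is_upset le U -> closure U y -> U y.
Proof.
move=> [oD _] uU /closureP_open cly.
have [u [Uu [_ -> uy]]] := cly _ oD (ex_intro2 _ _ y erefl (pries_refl L_pries y)).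
exact: uU Uu uy.
Qed.

Lemma scott_upset_spatial_below V v : scott_upset le V -> V v ->
  exists m, [/\ V m, spatial_part le m & le m v].
Proof.
move=> [cV _ minY] Vv; have [m [Vm mmin] mv] := minimal_below L_pries cV Vv.
by exists m; split => //; apply: minY.
Qed.

End LSpace.

Lemma core_upset {T : topologicalType} (le : T -> T -> Prop) U : is_upset le (core le U).
Proof.
by move=> x y [V [cV VU] Vx] xy; exists V => //; case: cV => _ [_ uV _]; exact: uV Vx xy.
Qed.

Lemma ClopSUp_sub_core {T : topologicalType} (le : T -> T -> Prop) V W :
  ClopSUp le V -> V `<=` W -> V `<=` core le W.
Proof. by move=> cV VW x Vx; exists V. Qed.

Section AlgebraicLSpace.
Context {T : topologicalType} (le : T -> T -> Prop).
Hypothesis HA : algebraic_L_space le.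
Let HL : L_space le := proj1 HA.

Lemma ClopUp_spatial_sub W1 W2 : ClopUp le W1 -> ClopUp le W2 ->
  (forall y, spatial_part le y -> W1 y -> W2 y) -> W1 `<=` W2.
Proof.
move=> cW1 [[_ cW2] uW2] W12.
have core_sub : core le W1 `<=` W2.
  move=> v [V [[_ sV] VW] Vv].
  have [m [Vm Ym mv]] := scott_upset_spatial_below HL sV Vv.
  exact: uW2 (W12 m Ym (VW m Vm)) mv.
move=> x /(proj2 HA W1 cW1) clx.
by rewrite (closure_id W2).1 //; apply: closureS core_sub _ clx.
Qed.

Lemma ClopUp_spatial_eq W1 W2 : ClopUp le W1 -> ClopUp le W2 ->
  (forall y, spatial_part le y -> W1 y <-> W2 y) -> W1 = W2.
Proof.
move=> c1 c2 W12; apply/seteqP; split; apply: ClopUp_spatial_sub => // y Yy.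
  by move/W12: Yy => [].
by move/W12: Yy => [].
Qed.

Lemma spatial_ClopSUp W y : ClopUp le W -> spatial_part le y -> W y ->
  exists V, [/\ ClopSUp le V, V `<=` W & V y].
Proof.
move=> cW Yy Wy.
have [V [cV VW] Vy] := spatial_closure_upset HL Yy (@core_upset _ le W) (proj2 HA W cW y Wy).
by exists V.
Qed.

(* Every point of V lies above a spatial point of V, a minimal point of one of
   the Scott upsets covering V; so the upsets [g i] cover the compact set V. *)
Lemma spatial_finite_subcover V (I : Type) (g : I -> set T) :
  closed V -> V `<=` core le V -> (forall i, open (g i)) -> (forall i, is_upset le (g i)) ->
  (forall y, spatial_part le y -> V y -> exists i, g i y) ->
  exists s, V `<=` \bigcup_(i in set_of_list s) g i.
Proof.
move=> cV Vc og ug cov.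
apply: compact_finite_subcover (pries_closed_compact (L_pries HL) cV) og _.
move=> v /Vc [V' [[_ sV'] V'V] V'v].
have [m [V'm Ym mv]] := scott_upset_spatial_below HL sV' V'v.
have [i gm] := cov m Ym (V'V m V'm).
by exists i => //; exact: ug gm mv.
Qed.

End AlgebraicLSpace.

(** * The spatial part as a compactly based sober space *)

Definition spatial (T : topologicalType) (le : T -> T -> Prop) :=
  {x : T | spatial_part le x}.

HB.instance Definition _ (T : topologicalType) (le : T -> T -> Prop) :=
  gen_eqMixin (spatial le).
HB.instance Definition _ (T : topologicalType) (le : T -> T -> Prop) :=
  gen_choiceMixin (spatial le).

Section SpatialTopology.
Context {T : topologicalType} (le : T -> T -> Prop).

Definition spatial_open : set_system (spatial le) :=
  [set O | exists U : set T, [/\ open U, is_upset le U & O = sval @^-1` U]].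

Lemma spatial_openT : spatial_open setT.
Proof. by exists setT; split => //; exact: openT. Qed.

Lemma spatial_openI : setI_closed spatial_open.
Proof.
move=> _ _ [U [oU uU ->]] [V [oV uV ->]].
by exists (U `&` V); split; [exact: openI|exact: upsetI|].
Qed.

Lemma spatial_open_bigcup (I : Type) (O : I -> set (spatial le)) :
  (forall i, spatial_open (O i)) -> spatial_open (\bigcup_i O i).
Proof.
move=> oO; pose U i := sval (cid (oO i)).
have HU i : [/\ open (U i), is_upset le (U i) & O i = sval @^-1` U i] := svalP (cid (oO i)).
exists (\bigcup_i U i); split.
- by apply: bigcup_open => i _; case: (HU i).
- by move=> x y [i _ Ux] xy; exists i => //; case: (HU i) => _ uU _; exact: uU Ux xy.
- by rewrite preimage_bigcup; apply: eq_bigcupr => i _; case: (HU i).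
Qed.

End SpatialTopology.

HB.instance Definition _ (T : topologicalType) (le : T -> T -> Prop) :=
  isOpenTopological.Build (spatial le)
    (spatial_openT le) (@spatial_openI T le) (@spatial_open_bigcup T le).

Section SpatialPart.
Context {T : topologicalType} (le : T -> T -> Prop).

Lemma spatial_openE (A : set (spatial le)) :
  open A <-> exists U : set T, [/\ open U, is_upset le U & A = sval @^-1` U].
Proof. by []. Qed.

Lemma spatial_closure1P (x z : spatial le) : priestley_space le ->
  closure [set x] z <-> le (sval z) (sval x).
Proof.
move=> HP; rewrite closureP_open; split => [clz|zx Q /spatial_openE [U [_ uU ->]] Uz].
  apply: contrapT => nzx; have [U [[oU _] uU Uz nUx]] := pries_sep HP nzx.
  have oQ : open (sval @^-1` U : set (spatial le)) by apply/spatial_openE; exists U.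
  by have [_ [-> Ux]] := clz _ oQ Uz.
by exists x; split => //; exact: uU Uz zx.
Qed.

Lemma spatial_closure1_inj (x y : spatial le) : priestley_space le ->
  closure [set x] = closure [set y] -> x = y.
Proof.
move=> HP exy.
have yx : closure [set x] y by rewrite exy; exact: subset_closure.
have xy : closure [set y] x by rewrite -exy; exact: subset_closure.
move: x y {exy} xy yx => [x Yx] [y Yy].
move=> /spatial_closure1P-/(_ HP) xy /spatial_closure1P-/(_ HP) yx.
by apply: eq_exist; apply: (pries_anti HP xy yx).
Qed.

End SpatialPart.

Section SpatialLSpace.
Context {T : topologicalType} (le : T -> T -> Prop).
Hypothesis HA : algebraic_L_space le.
Let HL : L_space le := proj1 HA.
Let HP : priestley_space le := L_pries HL.

Lemma open_spatial_trace (O : set (spatial le)) : open O ->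
  exists W, ClopUp le W /\ O = sval @^-1` W.
Proof.
move=> /spatial_openE [U [oU uU ->]]; exists (closure U); split; first exact: ClopUp_closure.
apply/seteqP; split => y; first by move=> Uy; apply: subset_closure.
exact: (spatial_closure_upset HL (svalP y) uU : closure U _ -> U _).
Qed.

Lemma compact_spatial_trace (V : set T) : closed V -> V `<=` core le V ->
  compact (sval @^-1` V : set (spatial le)).
Proof.
move=> cV Vc; apply: finite_subcover_compact => I O oO cov.
have HU i : exists U : set T, [/\ open U, is_upset le U & O i = sval @^-1` U].
  exact/spatial_openE/oO.
pose U i := sval (cid (HU i)).
have [oU uU eU] : [/\ forall i, open (U i), forall i, is_upset le (U i)
                   & forall i, O i = sval @^-1` U i].
  by split => i; case: (svalP (cid (HU i))).
have [|s Vs] := spatial_finite_subcover HA cV Vc oU uU.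
  by move=> y Yy Vy; have [i _] := cov (exist _ y Yy) Vy; rewrite eU; exists i.
by exists s => x /Vs [i si Ux]; exists i; rewrite ?eU.
Qed.

Lemma spatial_compactly_based : compactly_based (spatial le).
Proof.
move=> O x oO Ox; have [W [cW eO]] := open_spatial_trace oO.
have [|V [cV VW Vx]] := spatial_ClopSUp HA cW (svalP x); first by rewrite eO in Ox.
have [[oV _] [clV uV _]] := cV.
exists (sval @^-1` V); split => //.
- by apply/spatial_openE; exists V.
- by apply: compact_spatial_trace => //; exact: ClopSUp_sub_core.
- by rewrite eO => z /VW.
Qed.

Lemma compact_open_spatial_trace (K : set (spatial le)) : open K -> compact K ->
  exists V, [/\ ClopUp le V, V `<=` core le V & K = sval @^-1` V].
Proof.
move=> oK cK; have [W [cW eK]] := open_spatial_trace oK.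
have HV (k : {k | K k}) : exists V, [/\ ClopSUp le V, V `<=` W & V (sval (sval k))].
  case: k => z /=; rewrite {1}eK => Wz.
  by have [V HV] := spatial_ClopSUp HA cW (svalP z) Wz; exists V.
pose V k := sval (cid (HV k)).
have HVk k : [/\ ClopSUp le (V k), V k `<=` W & V k (sval (sval k))] := svalP (cid (HV k)).
have [||s Ks] := @compact_finite_subcover _ K _ (fun k => sval @^-1` V k) cK.
- move=> k; apply/spatial_openE; exists (V k).
  by case: (HVk k) => -[[oV _] [_ uV _]] _ _.
- by move=> z Kz; exists (exist _ z Kz) => //; case: (HVk (exist _ z Kz)).
exists (\bigcup_(k in set_of_list s) V k); split.
- apply: bigcup_list_closed => [||k _]; [exact: ClopUp0|exact: ClopUpU|].
  by case: (HVk k) => -[cl [_ u _]] _ _.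
- move=> x [k sk Vx]; case: (HVk k) => cV _ _.
  by apply: (ClopSUp_sub_core cV _ Vx) => y Vy; exists k.
- apply/seteqP; split => [z /Ks [k sk Vz]|z [k _ Vz]]; first by exists k.
  by rewrite eK; case: (HVk k) => _ VW _; exact: VW.
Qed.

(* The complement of an irreducible closed set is the trace of a prime clopen
   upset W, and the top of the principal downset ~` W is the generic point. *)
Lemma spatial_sober : sober (spatial le).
Proof.
move=> C [cC [c0 Cc0] irr].
have [W [cW eC]] := open_spatial_trace (closed_openC cC).
have nCW z : ~ C z <-> W (sval z) by rewrite -[~ C z]/((~` C) z) eC.
have CnW z : C z <-> ~ W (sval z).
  by split => [Cz /nCW|nWz]; [|apply: contrapT => /nCW].
have closedC_trace (Wi : set T) : ClopUp le Wi -> closed (~` (sval @^-1` Wi : set (spatial le))).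
  by move=> [[oWi _] uWi]; rewrite closedC; apply/spatial_openE; exists Wi.
have prime W1 W2 : ClopUp le W1 -> ClopUp le W2 -> W1 `&` W2 `<=` W ->
    W1 `<=` W \/ W2 `<=` W.
  move=> c1 c2 W12.
  have [z Cz|CW1|CW2] := irr _ _ (closedC_trace _ c1) (closedC_trace _ c2).
  - apply: contrapT => /not_orP [/contrapT W1z /contrapT W2z].
    by move/CnW: Cz; apply; exact: W12.
  - left; apply: (ClopUp_spatial_sub HA c1 cW) => y Yy W1y.
    by apply/(nCW (exist _ y Yy)) => /CW1.
  - right; apply: (ClopUp_spatial_sub HA c2 cW) => y Yy W2y.
    by apply/(nCW (exist _ y Yy)) => /CW2.
have [x ex] := prime_ClopUp_downset1 HP cW (ex_intro _ (sval c0) ((CnW c0).1 Cc0)) prime.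
have Yx : spatial_part le x by rewrite /spatial_part /= ex; apply: clopenC; case: cW.
pose x' : spatial le := exist _ x Yx.
have Cx : closure [set x'] = C.
  apply/seteqP; split => z; rewrite spatial_closure1P // CnW -[~ W _]/((~` W) (sval z)) -ex.
    by move=> zx; exists x.
  by move=> [_ -> zx].
exists x'; split => // y Cy.
by apply: spatial_closure1_inj HP _; rewrite -Cy.
Qed.

End SpatialLSpace.

Section SpatialMap.
Context {T1 T2 : topologicalType} (le1 : T1 -> T1 -> Prop) (le2 : T2 -> T2 -> Prop).
Hypotheses (HL1 : L_space le1) (HL2 : L_space le2).

(* With U the complement of the downset of f y, the L-morphism identity turns
   "y is not in the closure of f^-1 U" into "f y is not in the closure of U",
   so the downset of f y is the complement of the clopen set [closure U]. *)
Lemma L_morphism_spatial (f : T1 -> T2) y : L_morphism le1 le2 f ->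
  spatial_part le1 y -> spatial_part le2 (f y).
Proof.
move=> [_ mf clf] [oD _]; have HP2 := L_pries HL2.
pose U := ~` downset le2 [set f y].
have oU : open U by apply: closed_openC; exact: closed_downset1.
have uU : is_upset le2 U.
  by move=> z w Uz zw [_ -> wy]; apply: Uz; exists (f y) => //; exact: (pries_trans HP2 zw wy).
have nclU : ~ closure U (f y).
  rewrite -[closure U (f y)]/((f @^-1` closure U) y) clf // => /closureP_open cly.
  have [x [Ux [_ -> xy]]] := cly _ oD (ex_intro2 _ _ y erefl (pries_refl (L_pries HL1) y)).
  by apply: Ux; exists (f y) => //; exact: mf.
rewrite /spatial_part /=; have -> : downset le2 [set f y] = ~` closure U.
  apply/seteqP; split => [z yz clz|z nclz].
    by case: yz => _ -> zy; apply: nclU; exact: (closure_upset HL2 uU clz zy).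
  by apply: contrapT => nD; apply: nclz; apply: subset_closure.
by apply: clopenC; case: (ClopUp_closure HL2 oU uU).
Qed.

Definition spatial_map (f : T1 -> T2) (Hf : L_morphism le1 le2 f) :
    spatial le1 -> spatial le2 :=
  fun y => exist _ (f (sval y)) (L_morphism_spatial Hf (svalP y)).

Lemma spatial_map_coherent (f : T1 -> T2) (Hf : coherent_L_morphism le1 le2 f) :
  algebraic_L_space le1 -> algebraic_L_space le2 ->
  coherent_map (spatial_map (proj1 Hf)).
Proof.
move=> HA1 HA2; have [[cf mf _] cohf] := Hf; split.
  apply/continuousP => _ /spatial_openE [U [oU uU ->]].
  apply/spatial_openE; exists (f @^-1` U); split => //.
  - by move/continuousP: cf; apply.
  - by move=> x y Ux xy; apply: uU Ux (mf _ _ xy).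
move=> K oK cK.
have [V [cV Vc ->]] := compact_open_spatial_trace HA2 oK cK.
have -> : spatial_map (proj1 Hf) @^-1` (sval @^-1` V) = sval @^-1` (f @^-1` V) by [].
apply: (compact_spatial_trace HA1).
  by case: cV => -[_ clV] _; move/continuous_closedP: cf; apply.
by move=> x Vx; apply: (cohf V cV); exact: Vc.
Qed.

End SpatialMap.

(** * Prime filters of open sets *)

Section OpenFilters.
Context {Z : topologicalType}.

Record open_filter (F : set (set Z)) : Prop := {
  ofilter_open : forall V, F V -> open V;
  ofilterT : F setT;
  ofilterI : setI_closed F;
  ofilterS : forall V W, open W -> F V -> V `<=` W -> F W }.

Record open_prime_filter (P : set (set Z)) : Prop := {
  pfilter_open : forall V, P V -> open V;
  pfilterT : P setT;
  pfilter0 : ~ P set0;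
  pfilterI : setI_closed P;
  pfilterS : forall V W, open W -> P V -> V `<=` W -> P W;
  pfilterU : forall V W, open V -> open W -> P (V `|` W) -> P V \/ P W }.

Lemma prime_filter_open_filter P : open_prime_filter P -> open_filter P.
Proof. by case=> *; split. Qed.

Definition open_filter_extend (G : set (set Z)) (V : set Z) : set (set Z) :=
  [set U | open U /\ exists2 A, G A & A `&` V `<=` U].

Lemma open_filter_extend_filter G V : open_filter G -> open_filter (open_filter_extend G V).
Proof.
move=> [Go GT GI GS]; split.
- by move=> U [].
- by split; [exact: openT|exists setT].
- move=> U U' [oU [A GA AU]] [oU' [B GB BU']]; split; first exact: openI.
  by exists (A `&` B); [exact: GI|move=> z [[Az Bz] Vz]; split; [apply: AU|apply: BU']].
- move=> U U' oU' [oU [A GA AU]] UU'; split => //.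
  by exists A => //; exact: subset_trans AU UU'.
Qed.

Lemma open_filter_extend_sub G V : open_filter G -> G `<=` open_filter_extend G V.
Proof. by move=> fG A GA; split; [exact: ofilter_open GA|exists A => // z []]. Qed.

Lemma open_filter_extend_mem G V : open_filter G -> open V -> open_filter_extend G V V.
Proof. by move=> fG oV; split => //; exists setT => [|z []]; [exact: ofilterT|]. Qed.

Section MaximalFilter.
Variables (F : set (set Z)) (W : set Z).
Hypotheses (fF : open_filter F) (nFW : ~ F W).

(* The nonemptiness guard lets the empty chain have an upper bound. *)
Let avoiding (G : set (set Z)) : Prop :=
  [/\ forall V, G V -> open V, G !=set0 -> F `<=` G, setI_closed G,
      forall V V', open V' -> G V -> V `<=` V' -> G V' & ~ G W].

Lemma maximal_avoiding_filter :
  exists M, [/\ open_filter M, F `<=` M, ~ M W &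
    forall G, open_filter G -> M `<` G -> G W].
Proof.
have [M [[Mo MF MI MS MW] Mmax]] : exists M, avoiding M /\ forall G, M `<` G -> ~ avoiding G.
  apply: Zorn_bigcup => G GP Gtot; split.
  - by move=> V [A GA AV]; have [+ _ _ _ _] := GP A GA; apply.
  - move=> [V [A GA AV]] U FU; exists A => //.
    by have [_ + _ _ _] := GP A GA; apply => //; exists V.
  - move=> V V' [A GA AV] [B GB BV'].
    have [AB|BA] := Gtot _ _ GA GB.
      by have [_ _ BI _ _] := GP B GB; exists B => //; apply: BI => //; exact: AB.
    by have [_ _ AI _ _] := GP A GA; exists A => //; apply: AI => //; exact: BA.
  - move=> V V' oV' [A GA AV] VV'; exists A => //.
    by have [_ _ _ AS _] := GP A GA; exact: (AS _ _ oV' AV VV').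
  - by move=> [A GA AW]; have [_ _ _ _] := GP A GA; apply.
have FM : F `<=` M.
  apply: MF; apply: contrapT => M0; exfalso; apply: (Mmax F).
    split => [V MV|]; first by exfalso; apply: M0; exists V.
    by move=> /(_ setT (ofilterT fF)) MT; apply: M0; exists setT.
  by have [Fo _ FI FS] := fF; split => // _.
have fM : open_filter M by split => //; exact: FM (ofilterT fF).
exists M; split => // G fG MG; apply: contrapT => nGW; apply: (Mmax G MG).
have [Go GT GI GS] := fG.
by split => // _; apply: subset_trans FM _; case: MG.
Qed.

End MaximalFilter.

Theorem prime_filter_theorem (F : set (set Z)) W : open_filter F -> open W -> ~ F W ->
  exists P, [/\ open_prime_filter P, F `<=` P & ~ P W].
Proof.
move=> fF oW nFW; have [M [fM FM MW Mmax]] := maximal_avoiding_filter fF nFW.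
have [Mo MT MI MS] := fM.
have ext V : open V -> ~ M V -> exists2 A, M A & A `&` V `<=` W.
  move=> oV nMV; have [_ [A MA AVW]] : open_filter_extend M V W.
    apply: Mmax; first exact: open_filter_extend_filter.
    split; first exact: open_filter_extend_sub.
    by move=> /(_ V (open_filter_extend_mem fM oV)).
  by exists A.
exists M; split => //; split => //.
- by move=> M0; apply: MW; apply: MS M0 _.
- move=> V1 V2 oV1 oV2 MV12; apply: contrapT => /not_orP [nMV1 nMV2].
  have [A1 MA1 AV1] := ext V1 oV1 nMV1; have [A2 MA2 AV2] := ext V2 oV2 nMV2.
  apply: MW; apply: (MS (A1 `&` A2 `&` (V1 `|` V2))) => //; first exact/MI/MV12/MI.
  by move=> z [[A1z A2z] [V1z|V2z]]; [exact: AV1|exact: AV2].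
Qed.

Lemma prime_filter_sep V W : open V -> open W -> ~ (V `<=` W) ->
  exists P, [/\ open_prime_filter P, P V & ~ P W].
Proof.
move=> oV oW nVW.
have fV : open_filter [set U | open U /\ V `<=` U].
  split => [U []|||U U' oU' [_ VU] UU'] //; first by split; [exact: openT|].
    move=> U U' [oU VU] [oU' VU']; split; first exact: openI.
    by move=> z Vz; split; [apply: VU|apply: VU'].
  by split => //; exact: subset_trans UU'.
have [|P [pP VP nPW]] := prime_filter_theorem fV oW; first by case.
by exists P; split => //; apply: VP; split.
Qed.

Lemma prime_filter_extend P V W : open_prime_filter P -> open V -> open W ->
  ~ (exists2 A, P A & A `&` V `<=` W) ->
  exists Q, [/\ open_prime_filter Q, P `<=` Q, Q V & ~ Q W].
Proof.
move=> pP oV oW nex; have fP := prime_filter_open_filter pP.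
have [|Q [pQ PVQ nQW]] := prime_filter_theorem (open_filter_extend_filter V fP) oW.
  by move=> [_ [A PA AVW]]; apply: nex; exists A.
exists Q; split => //; last exact/PVQ/open_filter_extend_mem.
by move=> A PA; apply/PVQ/open_filter_extend_sub.
Qed.

Lemma prime_filter_bigcap (P : set (set Z)) (I : Type) (f : I -> set Z) s :
  open_prime_filter P -> (forall i, set_of_list s i -> P (f i)) ->
  P (\bigcap_(i in set_of_list s) f i).
Proof. by move=> pP; apply: bigcap_list_closed; [exact: pfilterT|exact: pfilterI]. Qed.

Lemma prime_filter_bigcup (P : set (set Z)) (I : Type) (f : I -> set Z) s :
  open_prime_filter P -> (forall i, open (f i)) ->
  P (\bigcup_(i in set_of_list s) f i) -> exists2 i, set_of_list s i & P (f i).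
Proof.
move=> pP fo; elim: s => [|j s IH]; rewrite ?set_of_list_nil ?bigcup_set0.
  by move/(pfilter0 pP).
rewrite set_of_list_cons bigcup_setU1 => /(pfilterU pP (fo j)) [|Pj|/IH [i si Pi]].
- by apply: bigcup_list_closed => [||i _]; [exact: open0|exact: openU|].
- by exists j => //; left.
- by exists i => //; right.
Qed.

End OpenFilters.

(** * The Priestley space of prime filters of open sets *)

Definition pfilters (Z : topologicalType) := {P : set (set Z) | open_prime_filter P}.

HB.instance Definition _ (Z : topologicalType) := gen_eqMixin (pfilters Z).
HB.instance Definition _ (Z : topologicalType) := gen_choiceMixin (pfilters Z).

Section PatchTopology.
Context {Z : topologicalType}.

Definition phi (V : set Z) : set (pfilters Z) := [set P | sval P V].

Definition patch_open : set_system (pfilters Z) :=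
  [set O | forall P, O P -> exists V W,
     [/\ open V, open W, (phi V `\` phi W) P & phi V `\` phi W `<=` O]].

Lemma patch_openT : patch_open setT.
Proof.
move=> P _; exists setT, set0; split => //; [exact: openT|exact: open0|].
by split; [exact: pfilterT (svalP P)|exact: pfilter0 (svalP P)].
Qed.

Lemma patch_openI : setI_closed patch_open.
Proof.
move=> A B oA oB P [AP BP].
have [V1 [W1 [oV1 oW1 [V1P W1P] sA]]] := oA P AP.
have [V2 [W2 [oV2 oW2 [V2P W2P] sB]]] := oB P BP.
exists (V1 `&` V2), (W1 `|` W2); split; [exact: openI|exact: openU| |].
  split; first exact: (pfilterI (svalP P) V1P V2P).
  by move=> /(pfilterU (svalP P) oW1 oW2) [].
have pS (Q : pfilters Z) (V W : set Z) : open W -> sval Q V -> V `<=` W -> sval Q W.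
  exact: (pfilterS (svalP Q)).
move=> Q [QV nQW]; split.
  apply: sA; split; first by apply: pS oV1 QV _ => z [].
  by move=> QW1; apply: nQW; apply: pS (openU oW1 oW2) QW1 _ => z ?; left.
apply: sB; split; first by apply: pS oV2 QV _ => z [].
by move=> QW2; apply: nQW; apply: pS (openU oW1 oW2) QW2 _ => z ?; right.
Qed.

Lemma patch_open_bigcup (I : Type) (O : I -> set (pfilters Z)) :
  (forall i, patch_open (O i)) -> patch_open (\bigcup_i O i).
Proof.
move=> oO P [i _ OP]; have [V [W [oV oW VWP sub]]] := oO i P OP.
by exists V, W; split => // Q VWQ; exists i => //; apply: sub.
Qed.

End PatchTopology.

HB.instance Definition _ (Z : topologicalType) :=
  isOpenTopological.Build (pfilters Z)
    (@patch_openT Z) (@patch_openI Z) (@patch_open_bigcup Z).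

Section PrimeFilterSpace.
Context {Z : topologicalType}.
Local Notation PF := (pfilters Z).

Definition pf_le (P Q : PF) : Prop := sval P `<=` sval Q.

Lemma patch_openE (O : set PF) : open O <-> patch_open O.
Proof. by []. Qed.

Lemma pfilters_ext (P Q : PF) : sval P = sval Q -> P = Q.
Proof. by case: P Q => p pp [q pq] /= e; apply: eq_exist. Qed.

Lemma phi_open (V : set Z) : open V -> open (phi V).
Proof.
move=> oV; apply/patch_openE => P PV; exists V, set0; split => //; first exact: open0.
by split => //; exact: pfilter0 (svalP P).
Qed.

Lemma phi_closed (V : set Z) : open V -> closed (phi V).
Proof.
move=> oV; rewrite -[phi V]setCK closedC; apply/patch_openE => P nPV.
exists setT, V; split => //; first exact: openT.
by split => //; exact: pfilterT (svalP P).
Qed.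

Lemma phi_clopen (V : set Z) : open V -> clopen (phi V).
Proof. by move=> oV; split; [exact: phi_open|exact: phi_closed]. Qed.

Lemma phi_upset (V : set Z) : is_upset pf_le (phi V).
Proof. by move=> P Q PV; apply. Qed.

Lemma phi_diff_open (V W : set Z) : open V -> open W -> open (phi V `\` phi W).
Proof. by move=> oV oW; apply: openI; [exact: phi_open|exact: closed_openC (phi_closed oW)]. Qed.

(* An ultrafilter on prime filters converges to the prime filter of the open
   sets V with [phi V] in it. *)
Lemma pfilters_compact : compact [set: PF].
Proof.
rewrite compact_ultra => F UF _; have FF : Filter F by apply: ultra_proper.
pose P := [set V : set Z | open V /\ F (phi V)].
have phiT : phi [set: Z] = setT by apply/seteqP; split => // Q _; exact: pfilterT (svalP Q).
have phi0 : phi (set0 : set Z) = set0 by apply/seteqP; split => // Q; exact: pfilter0 (svalP Q).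
have pP : open_prime_filter P.
  split.
  - by move=> V [].
  - by split; [exact: openT|rewrite phiT; exact: filterT].
  - by move=> [_]; rewrite phi0; apply: filter_not_empty.
  - move=> V W [oV FV] [oW FW]; split; first exact: openI.
    by apply: filterS (filterI FV FW) => Q [QV QW]; exact: (pfilterI (svalP Q) QV QW).
  - move=> V W oW [oV FV] VW; split => //; apply: filterS FV => Q QV.
    exact: (pfilterS (svalP Q) oW QV VW).
  - move=> V W oV oW [oU FU]; apply: contrapT => /not_orP [nFV nFW].
    have [|FnV] := in_ultra_setVsetC (phi V) UF; first by move=> FV; apply: nFV.
    have [|FnW] := in_ultra_setVsetC (phi W) UF; first by move=> FW; apply: nFW.
    apply: (@filter_not_empty _ F).
    apply: filterS (filterI FU (filterI FnV FnW)) => Q [QU [nQV nQW]].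
    by have [] := pfilterU (svalP Q) oV oW QU.
exists (exist _ P pP); split => //.
move=> B; rewrite nbhsE => -[N [oN Np] NB].
have [V [W [oV oW [PV nPW] sub]]] := oN _ Np.
rewrite nbhs_filterE; apply: (filterS NB); apply: (filterS sub); apply: filterI.
  by case: PV.
have [FW|] := in_ultra_setVsetC (phi W) UF => //.
by exfalso; apply: nPW.
Qed.

Lemma pfilters_sep (P Q : PF) : ~ pf_le P Q ->
  exists U : set PF, [/\ clopen U, is_upset pf_le U, U P & ~ U Q].
Proof.
move=> nPQ; have [V PV nQV] : exists2 V, sval P V & ~ sval Q V.
  by apply: contrapT => nex; apply: nPQ => V PV; apply: contrapT => nQV; apply: nex; exists V.
exists (phi V); split => //; last exact: phi_upset.
exact: phi_clopen (pfilter_open (svalP P) PV).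
Qed.

Lemma pfilters_priestley : priestley_space pf_le.
Proof.
have pfilters_clopen_sep (P Q : PF) : P <> Q -> exists U : set PF, [/\ clopen U, U P & ~ U Q].
  move=> nPQ; have [PQ|nPQ'] := pselect (pf_le P Q); last first.
    by have [U [cU _ UP nUQ]] := pfilters_sep nPQ'; exists U.
  have [|U [cU _ UQ nUP]] := @pfilters_sep Q P.
    by move=> QP; apply: nPQ; apply: pfilters_ext; apply/seteqP; split.
  by exists (~` U); split => //; exact: clopenC.
split; last exact: pfilters_sep.
- split; [exact: pfilters_compact| |].
  + move=> P Q clPQ; apply: contrapT => /pfilters_clopen_sep [U [[oU clU] UP nUQ]].
    have [R [UR nUR]] := clPQ U (~` U) (open_nbhs_nbhs (conj oU UP))
      (open_nbhs_nbhs (conj (closed_openC clU) nUQ)).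
    exact: nUR UR.
  + apply: zero_dimension_totally_disconnected => P Q /eqP.
    exact: pfilters_clopen_sep.
- split => [P|P Q PQ QP|P Q R PQ QR]; [by []| |exact: subset_trans QR].
  by apply: pfilters_ext; apply/seteqP; split.
Qed.

End PrimeFilterSpace.

Section PrimeFilterLSpace.
Context {Z : topologicalType}.
Local Notation PF := (pfilters Z).

Lemma open_upset_phi_sub (Q : set PF) (P : PF) : open Q -> is_upset pf_le Q -> Q P ->
  exists V, [/\ open V, sval P V & phi V `<=` Q].
Proof.
move=> oQ uQ QP; apply: contrapT => nex.
have pP := svalP P.
have [|i|s|R nQR PR] := @compact_fip _ (~` Q) {V | sval P V} (fun V => phi (sval V)).
- by apply: (pries_closed_compact pfilters_priestley); rewrite closedC.
- exact/phi_closed/(pfilter_open pP)/(svalP i).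
- pose M := \bigcap_(V in set_of_list s) sval V.
  have PM : sval P M by apply: prime_filter_bigcap => // V _; exact: svalP.
  have oM : open M := pfilter_open pP PM.
  apply: contrapT => ne; apply: nex; exists M; split => // R RM.
  apply: contrapT => nQR; apply: ne; exists R; split => // V sV /=.
  by apply: (pfilterS (svalP R) (pfilter_open pP (svalP V)) RM) => x; apply.
by apply: nQR; apply: uQ QP _ => V PV; exact: (PR (exist _ V PV)).
Qed.

(* For a basic neighbourhood [phi A `\` phi W] of P, some [A `&` U i] is not
   inside W, as W is not in P; a prime filter containing it but not W lies in
   the neighbourhood and in Q. *)
Lemma phi_bigcup_sub_closure (I : Type) (D : set I) (U : I -> set Z) (Q : set PF) :
  (forall i, D i -> open (U i)) -> (forall i, D i -> phi (U i) `<=` Q) ->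
  phi (\bigcup_(i in D) U i) `<=` closure Q.
Proof.
move=> oU UQ P PU; apply/closureP_open => N oN NP; have pP := svalP P.
have [A [W [oA oW [PA nPW] sub]]] := oN _ NP.
have [i Di nAUW] : exists2 i, D i & ~ (A `&` U i `<=` W).
  apply: contrapT => nex; apply: nPW.
  apply: (pfilterS pP oW (pfilterI pP PA PU)) => x [Ax [i Di Uix]].
  apply: contrapT => nWx; apply: nex; exists i => // AUW.
  by apply: nWx; apply: AUW.
have [R [pR RAU nRW]] := prime_filter_sep (openI oA (oU i Di)) oW nAUW.
exists (exist _ R pR); split.
  by apply: (UQ i Di); apply: (pfilterS pR (oU i Di) RAU) => x [].
by apply: sub; split => //; apply: (pfilterS pR oA RAU) => x [].
Qed.

Definition phi_sup (Q : set PF) : set Z :=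
  \bigcup_(V in [set V | open V /\ phi V `<=` Q]) V.

Lemma phi_sup_open Q : open (phi_sup Q).
Proof. by apply: bigcup_open => V []. Qed.

Lemma closure_open_upset (Q : set PF) : open Q -> is_upset pf_le Q ->
  closure Q = phi (phi_sup Q).
Proof.
move=> oQ uQ; apply/seteqP; split; last first.
  by apply: phi_bigcup_sub_closure => V [].
rewrite [X in _ `<=` X](closure_id _).1; last exact/phi_closed/phi_sup_open.
apply: closureS => P QP; have [V [oV PV VQ]] := open_upset_phi_sub oQ uQ QP.
by apply: (pfilterS (svalP P) (phi_sup_open Q) PV) => x Vx; exists V.
Qed.

Definition open_imp (V W : set Z) : set Z :=
  \bigcup_(U in [set U | open U /\ U `&` V `<=` W]) U.

Lemma open_imp_open V W : open (open_imp V W).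
Proof. by apply: bigcup_open => U []. Qed.

Lemma downset_phi_diff (V W : set Z) : open V -> open W ->
  downset pf_le (phi V `\` phi W) = ~` phi (open_imp V W).
Proof.
move=> oV oW; apply/seteqP; split => [P [Q [QV nQW] PQ] PVW|P nPVW].
  apply: nQW; apply: (pfilterS (svalP Q) oW (pfilterI (svalP Q) (PQ _ PVW) QV)).
  by move=> x [[U [oU UW] Ux] Vx]; apply: UW.
have [|Q [pQ PQ QV nQW]] := prime_filter_extend (svalP P) oV oW.
  move=> [A PA AVW]; apply: nPVW; apply: (pfilterS (svalP P) (open_imp_open V W) PA).
  by move=> x Ax; exists A => //; split => //; exact: pfilter_open (svalP P) _ PA.
by exists (exist _ Q pQ).
Qed.

Lemma pfilters_downset_clopen (C : set PF) : clopen C -> clopen (downset pf_le C).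
Proof.
move=> [oC cC].
pose I := {VW : set Z * set Z | [/\ open VW.1, open VW.2 & phi VW.1 `\` phi VW.2 `<=` C]}.
pose B (i : I) := phi (sval i).1 `\` phi (sval i).2.
have [|||s Cs] := @compact_finite_subcover _ C I B.
- exact: (pries_closed_compact pfilters_priestley cC).
- by move=> i; case: (svalP i) => oV oW _; exact: phi_diff_open.
- move=> P CP; have [V [W [oV oW VWP sub]]] := oC _ CP.
  by exists (exist _ (V, W) (And3 oV oW sub)).
have -> : downset pf_le C = \bigcup_(i in set_of_list s) ~` phi (open_imp (sval i).1 (sval i).2).
  apply/seteqP; split.
    move=> P [Q CQ PQ]; have [i si BQ] := Cs Q CQ; exists i => //.
    by case: (svalP i) => oV oW _; rewrite -downset_phi_diff //; exists Q.
  move=> P [i si]; case: (svalP i) => oV oW sub.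
  by rewrite -downset_phi_diff // => -[Q BQ PQ]; exists Q => //; apply: sub.
split.
- apply: bigcup_list_closed => [||i _]; [exact: open0|exact: openU|].
  exact/closed_openC/phi_closed/open_imp_open.
- apply: bigcup_list_closed => [||i _]; [exact: closed0|exact: closedU|].
  by rewrite closedC; exact/phi_open/open_imp_open.
Qed.

Lemma pfilters_L_space : L_space (@pf_le Z).
Proof.
split; [exact: pfilters_priestley|exact: pfilters_downset_clopen|].
by move=> U oU uU; rewrite closure_open_upset //; exact/phi_open/phi_sup_open.
Qed.

End PrimeFilterLSpace.

Section NeighbourhoodFilters.
Context {Z : topologicalType}.
Local Notation PF := (pfilters Z).

Lemma nbhs_open_prime_filter (z : Z) : open_prime_filter [set V | open V /\ V z].
Proof.
split.
- by move=> V [].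
- by split => //; exact: openT.
- by case.
- by move=> V W [oV Vz] [oW Wz]; split => //; exact: openI.
- by move=> V W oW [oV Vz] VW; split => //; exact: VW.
- by move=> V W oV oW [_ [Vz|Wz]]; [left|right].
Qed.

Definition nbhs_pf (z : Z) : PF := exist _ _ (nbhs_open_prime_filter z).

Lemma downset_nbhs_pf z : downset pf_le [set nbhs_pf z] = ~` phi (~` closure [set z]).
Proof.
have oW : open (~` closure [set z]) by apply: closed_openC; exact: closed_closure.
apply/seteqP; split => [P [_ -> Pz] PW|P nPW].
  by have [_ []] := Pz _ PW; exact: subset_closure.
exists (nbhs_pf z) => // V PV; have oV := pfilter_open (svalP P) PV; split => //.
apply: contrapT => nVz; apply: nPW; apply: (pfilterS (svalP P) oW PV) => x Vx.
by move=> /closureP_open/(_ V oV Vx) [_ [-> Vz]].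
Qed.

Lemma nbhs_pf_spatial z : spatial_part (@pf_le Z) (nbhs_pf z).
Proof.
rewrite /spatial_part /= downset_nbhs_pf; apply: (clopenC set0); apply: phi_clopen.
by apply: closed_openC; exact: closed_closure.
Qed.

Lemma ClopUp_phiE (C : set PF) : ClopUp (@pf_le Z) C -> exists2 V, open V & C = phi V.
Proof.
move=> [[oC cC] uC]; exists (phi_sup C); first exact: phi_sup_open.
by rewrite -closure_open_upset //; apply/closure_id.
Qed.

(* Every prime filter avoiding W lies below P. So when ~` W is not inside the
   closed set A, a prime filter containing ~` A but not W puts ~` A in P, and
   two such sets A, B covering ~` W would put W in P. *)
Lemma downset1_phiC_irreducible (P : PF) (W : set Z) : open W ->
  downset pf_le [set P] = ~` phi W -> irreducible_closed (~` W).
Proof.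
move=> oW eD; have pP := svalP P.
have belowP Q : ~ sval Q W -> pf_le Q P.
  by move=> nQW; have : (~` phi W) Q by []; rewrite -eD => -[_ ->].
have nPW : ~ sval P W.
  by rewrite -[~ _]/((~` phi W) P) -eD; exists P => //; exact: subset_refl.
split; first by rewrite closedC.
  apply: contrapT => ne; apply: nPW; apply: (pfilterS pP oW (pfilterT pP)) => x _.
  by apply: contrapT => nWx; apply: ne; exists x.
have inP (A : set Z) : closed A -> ~ (~` W `<=` A) -> sval P (~` A).
  move=> cA nWA; have [|Q [pQ QA nQW]] := prime_filter_sep (closed_openC cA) oW.
    by move=> AW; apply: nWA => x nWx; apply: contrapT => nAx; apply: nWx; exact: AW.
  exact: (belowP (exist _ Q pQ)).
move=> A B cA cB WAB; apply: contrapT => /not_orP [nA nB]; apply: nPW.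
apply: (pfilterS pP oW (pfilterI pP (inP A cA nA) (inP B cB nB))) => x [nAx nBx].
by apply: contrapT => /WAB [].
Qed.

Lemma spatial_nbhs_pf (P : PF) : sober Z -> spatial_part (@pf_le Z) P ->
  exists z, P = nbhs_pf z.
Proof.
move=> sob YP.
have cnD : ClopUp (@pf_le Z) (~` downset pf_le [set P]).
  split; first exact: (clopenC set0 YP).
  by move=> Q R nDQ QR [_ -> RP]; apply: nDQ; exists P => //; exact: subset_trans RP.
have [W oW eW] := ClopUp_phiE cnD.
have eD : downset pf_le [set P] = ~` phi W by rewrite -eW setCK.
have [z [ez _]] := sob _ (downset1_phiC_irreducible oW eD).
have eDz : downset pf_le [set P] = downset pf_le [set nbhs_pf z].
  by rewrite eD downset_nbhs_pf -ez setCK.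
exists z; apply: (pries_anti pfilters_priestley).
  have : downset pf_le [set P] P by exists P => //; exact: subset_refl.
  by rewrite eDz => -[_ ->].
have : downset pf_le [set P] (nbhs_pf z).
  by rewrite eDz; exists (nbhs_pf z) => //; exact: subset_refl.
by case=> _ ->.
Qed.

End NeighbourhoodFilters.

Section PrimeFilterAlgebraic.
Context {Z : topologicalType}.
Local Notation PF := (pfilters Z).

(* A minimal element P of phi K lies above the neighbourhood filter of some
   point of K: otherwise a finite subcover of K by opens outside P gives an
   open union in P, none of whose members is in P. *)
Lemma phi_compact_ClopSUp (K : set Z) : open K -> compact K ->
  ClopSUp (@pf_le Z) (phi K).
Proof.
move=> oK cK; split; first exact: phi_clopen.
split; [exact: phi_closed|exact: phi_upset|move=> P [PK Pmin]].
have [z Kz zP] : exists2 z, K z & pf_le (nbhs_pf z) P.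
  apply: contrapT => nex.
  have HU (k : {z | K z}) : exists U, [/\ open U, U (sval k) & ~ sval P U].
    apply: contrapT => nU; apply: nex; exists (sval k); first exact: svalP.
    move=> U [oU Uk]; apply: contrapT => nPU; apply: nU; by exists U.
  pose U k := sval (cid (HU k)).
  have HUk k : [/\ open (U k), U k (sval k) & ~ sval P (U k)] := svalP (cid (HU k)).
  have oU k : open (U k) by case: (HUk k).
  have [||s Ks] := @compact_finite_subcover _ K _ U cK => //.
    by move=> x Kx; exists (exist _ x Kx) => //; case: (HUk (exist _ x Kx)).
  have oUs : open (\bigcup_(k in set_of_list s) U k).
    by apply: bigcup_list_closed => [||k _]; [exact: open0|exact: openU|].
  have [k _ PUk] := prime_filter_bigcup (svalP P) oU (pfilterS (svalP P) oUs PK Ks).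
  by case: (HUk k).
have -> : P = nbhs_pf z by apply/esym/Pmin.
exact: nbhs_pf_spatial.
Qed.

Lemma pfilters_algebraic : compactly_based Z -> algebraic_L_space (@pf_le Z).
Proof.
move=> kb; split; first exact: pfilters_L_space.
move=> C cC; have [V oV ->] := ClopUp_phiE cC.
move=> P PV; apply/closureP_open => N oN NP; have pP := svalP P.
have [A [W [oA oW [PA nPW] sub]]] := oN _ NP.
have [K [oK cK KAV] nKW] : exists2 K, [/\ open K, compact K & K `<=` A `&` V] & ~ (K `<=` W).
  apply: contrapT => nex; apply: nPW.
  apply: (pfilterS pP oW (pfilterI pP PA PV)) => x AVx.
  have [K [oK cK Kx KAV]] := kb _ x (openI oA oV) AVx.
  by apply: contrapT => nWx; apply: nex; exists K => // KW; apply: nWx; apply: KW.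
have [R [pR RK nRW]] := prime_filter_sep oK oW nKW.
exists (exist _ R pR); split.
  exists (phi K); last exact: RK.
  split; first exact: phi_compact_ClopSUp.
  by move=> Q QK; apply: (pfilterS (svalP Q) oV QK) => x /KAV [].
by apply: sub; split => //=; apply: (pfilterS pR oA RK) => x /KAV [].
Qed.

(* An open cover of V without finite subcover yields, by compactness of phi V,
   a prime filter in phi V containing no [g i]; a minimal one below it is the
   neighbourhood filter of a point of V, which some [g i] contains. *)
Lemma ClopSUp_phi_compact (V : set Z) : sober Z -> open V ->
  ClopSUp (@pf_le Z) (phi V) -> compact V.
Proof.
move=> sob oV [_ [clV _ minY]].
apply: finite_subcover_compact => I g og cov; apply: contrapT => nex.
have [|i|s|Q QV Qg] := @compact_fip _ (phi V) I (fun i => ~` phi (g i)).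
- exact: pries_closed_compact pfilters_priestley _ clV.
- by rewrite closedC; exact: phi_open.
- have ogs : open (\bigcup_(i in set_of_list s) g i).
    by apply: bigcup_list_closed => [||i _]; [exact: open0|exact: openU|].
  have [|R [pR RV nRg]] := prime_filter_sep oV ogs; first by move=> Vg; apply: nex; exists s.
  exists (exist _ R pR); split => // i si gi; apply: nRg.
  by apply: (pfilterS pR ogs gi) => x gx; exists i.
have [m [Vm mmin] mQ] := minimal_below pfilters_priestley clV QV.
have [z ez] := spatial_nbhs_pf sob (minY m (conj Vm mmin)).
have [_ Vz] : phi V (nbhs_pf z) by rewrite -ez.
have [i _ gz] := cov z Vz.
by apply: (Qg i); apply: mQ; rewrite ez; split => //; exact: og.
Qed.

End PrimeFilterAlgebraic.

Section PrimeFilterMap.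
Context {Z1 Z2 : topologicalType} (g : Z1 -> Z2).
Hypothesis cg : continuous g.

Let open_preimage V : open V -> open (g @^-1` V).
Proof. by move=> oV; move/continuousP: cg; apply. Qed.

Lemma pf_map_prime_filter (P : pfilters Z1) :
  open_prime_filter [set V | open V /\ sval P (g @^-1` V)].
Proof.
have pP := svalP P; split.
- by move=> V [].
- by split; [exact: openT|exact: pfilterT pP].
- by move=> [_ P0]; apply: (pfilter0 pP).
- move=> V W [oV PV] [oW PW]; split; first exact: openI.
  exact: (pfilterI pP PV PW).
- move=> V W oW [oV PV] VW; split => //.
  by apply: (pfilterS pP (open_preimage oW) PV) => x /VW.
- move=> V W oV oW [_ PVW].
  by have [PV|PW] := pfilterU pP (open_preimage oV) (open_preimage oW) PVW; [left|right].
Qed.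

Definition pf_map (P : pfilters Z1) : pfilters Z2 := exist _ _ (pf_map_prime_filter P).

Lemma pf_map_continuous : continuous pf_map.
Proof.
apply/continuousP => O oO; apply/patch_openE => P OP.
have [V [W [oV oW [PV nPW] sub]]] := oO _ OP.
exists (g @^-1` V), (g @^-1` W); split; [exact: open_preimage|exact: open_preimage| |].
  by split; [case: PV|move=> PW; apply: nPW; split].
by move=> R [RV nRW]; apply: sub; split; [split|case].
Qed.

Lemma pf_map_mono P Q : pf_le P Q -> pf_le (pf_map P) (pf_map Q).
Proof. by move=> PQ V [oV PV]; split => //; exact: PQ. Qed.

Lemma pf_map_L_morphism : L_morphism (@pf_le Z1) (@pf_le Z2) pf_map.
Proof.
split; [exact: pf_map_continuous|exact: pf_map_mono|move=> O oO uO].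
apply/seteqP; split; last first.
  have clO : closed (pf_map @^-1` closure O).
    by move/continuous_closedP: pf_map_continuous; apply; exact: closed_closure.
  rewrite [X in _ `<=` X](closure_id _).1 //; apply: closureS => Q OQ.
  exact: subset_closure.
move=> P; rewrite -[(pf_map @^-1` _) P]/(closure O (pf_map P)) closure_open_upset //.
move=> [_ PO]; rewrite /phi_sup preimage_bigcup in PO.
apply: (phi_bigcup_sub_closure (U := preimage g) _ _ PO) => [V [oV _]|V [oV VO] R RV].
  exact: open_preimage.
by apply: VO; split.
Qed.

Lemma pf_map_coherent : sober Z2 ->
  (forall K, open K -> compact K -> compact (g @^-1` K)) ->
  coherent_L_morphism (@pf_le Z1) (@pf_le Z2) pf_map.
Proof.
move=> sob cohg; split; first exact: pf_map_L_morphism.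
move=> C cC P [S [cS SC] SP].
have [V' oV' eS] := ClopUp_phiE (conj (proj1 cS) (let: And3 _ uS _ := proj2 cS in uS)).
rewrite eS in cS SP SC.
have cV' : compact V' := ClopSUp_phi_compact sob oV' cS.
exists (phi (g @^-1` V')); last by case: SP.
split; first exact: phi_compact_ClopSUp (open_preimage oV') (cohg _ oV' cV').
by move=> Q QV'; apply: SC; split.
Qed.

End PrimeFilterMap.

(** * The unit and the counit *)

Section Homeomorphism.
Context {X X' : topologicalType} (f : X -> X') (h : X' -> X).
Hypotheses (hf : cancel f h) (fh : cancel h f) (cf : continuous f) (ch : continuous h).

Let open_preimage V : open V -> open (f @^-1` V).
Proof. by move=> oV; move/continuousP: cf; apply. Qed.

Let closed_preimage V : closed V -> closed (f @^-1` V).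
Proof. by move=> cV; move/continuous_closedP: cf; apply. Qed.

Lemma homeo_coherent_map : coherent_map f.
Proof.
split => // K oK cK; have -> : f @^-1` K = h @` K.
  apply/seteqP; split => [x Kfx|_ [y Ky <-]]; first by exists (f x).
  by rewrite /preimage /= fh.
by apply: continuous_compact => //; exact: continuous_subspaceT.
Qed.

Lemma homeo_preimage_closure (U : set X') : f @^-1` closure U = closure (f @^-1` U).
Proof.
apply/seteqP; split => x /closureP_open clx; apply/closureP_open => Q oQ Qx.
  have oQ' : open (h @^-1` Q) by move/continuousP: ch; apply.
  have [u [Uu Qu]] := clx _ oQ' (eq_ind_r Q Qx (hf x)).
  by exists (h u); split; rewrite /preimage /= ?fh.
by have [w [Uw Qw]] := clx _ (open_preimage oQ) Qx; exists (f w).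
Qed.

Lemma order_homeo_coherent_L (le : X -> X -> Prop) (le' : X' -> X' -> Prop) :
  (forall x y, le x y -> le' (f x) (f y)) -> (forall x y, le' x y -> le (h x) (h y)) ->
  coherent_L_morphism le le' f.
Proof.
move=> mf mh; split; first by split => // U _ _; exact: homeo_preimage_closure.
move=> U cU x [V [[cV [clV uV minV]] VU] Vx].
exists (f @^-1` V) => //; split => [|y]; last exact: VU.
split; first exact: preimage_clopen.
split => [||m [Vm mmin]]; first exact: closed_preimage.
  by move=> a b Va ab; exact: uV Va (mf _ _ ab).
have Yfm : spatial_part le' (f m).
  apply: minV; split => // y Vy yfm.
  have hym : h y = m by apply: mmin; [rewrite /preimage /= fh|rewrite -(hf m); exact: mh].
  by rewrite -hym fh.
rewrite /spatial_part /= in Yfm *.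
have -> : downset le [set m] = f @^-1` downset le' [set f m].
  apply/seteqP; split => [z [_ -> zm]|z [_ -> zfm]]; first by exists (f m) => //; exact: mf.
  by exists m => //; rewrite -(hf z) -(hf m); exact: mh.
exact: preimage_clopen.
Qed.

End Homeomorphism.

Lemma irreducible_closure1 {Z : topologicalType} (z : Z) : irreducible_closed (closure [set z]).
Proof.
split; [exact: closed_closure|by exists z; exact: subset_closure|].
move=> A B cA cB /(_ z (subset_closure (erefl z))) [Az|Bz]; [left|right].
  by rewrite [X in _ `<=` X](closure_id A).1 //; apply: closureS => _ ->.
by rewrite [X in _ `<=` X](closure_id B).1 //; apply: closureS => _ ->.
Qed.

Section SoberUnit.
Context {Z : topologicalType}.
Hypothesis sob : sober Z.
Local Notation SP := (spatial (@pf_le Z)).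

(* Sober spaces are T0: a point is determined by its neighbourhood filter. *)
Lemma nbhs_pf_inj : injective (@nbhs_pf Z).
Proof.
move=> z z' e.
have closure_sub (a b : Z) : nbhs_pf a = nbhs_pf b -> closure [set a] `<=` closure [set b].
  move=> eab x /closureP_open clx; apply/closureP_open => Q oQ Qx.
  have [_ [-> Qa]] := clx Q oQ Qx.
  have : sval (nbhs_pf a) Q by split.
  by rewrite eab => -[_ Qb]; exists b.
have [x [_ uniq]] := sob (irreducible_closure1 z).
have ezz' : closure [set z] = closure [set z'] by apply/seteqP; split; apply: closure_sub.
by rewrite -(uniq z erefl) -(uniq z' ezz').
Qed.

Definition to_spatial_pf (z : Z) : SP := exist _ (nbhs_pf z) (nbhs_pf_spatial z).

Definition of_spatial_pf (y : SP) : Z := sval (cid (spatial_nbhs_pf sob (svalP y))).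

Lemma of_spatial_pfK (y : SP) : sval y = nbhs_pf (of_spatial_pf y).
Proof. exact: (svalP (cid (spatial_nbhs_pf sob (svalP y)))). Qed.

Lemma to_spatial_pfK : cancel of_spatial_pf to_spatial_pf.
Proof. by case=> P YP; apply: eq_exist; rewrite -of_spatial_pfK. Qed.

Lemma of_to_spatial_pfK : cancel to_spatial_pf of_spatial_pf.
Proof. by move=> z; apply: nbhs_pf_inj; rewrite -of_spatial_pfK. Qed.

Lemma to_spatial_pf_continuous : continuous to_spatial_pf.
Proof.
apply/continuousP => _ /spatial_openE [U [oU uU ->]]; apply: open_locally => z Uz.
have [V [oV [_ Vz] VU]] := open_upset_phi_sub oU uU Uz.
by exists V; split => // w Vw; apply: VU; split.
Qed.

Lemma of_spatial_pf_continuous : continuous of_spatial_pf.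
Proof.
apply/continuousP => V oV; apply/spatial_openE; exists (phi V).
split; [exact: phi_open|exact: phi_upset|].
apply/seteqP; split => y; rewrite /preimage /= /phi /= of_spatial_pfK; first by split.
by case.
Qed.

Lemma to_spatial_pf_coherent : coherent_map to_spatial_pf.
Proof.
exact: (homeo_coherent_map of_to_spatial_pfK to_spatial_pfK
  to_spatial_pf_continuous of_spatial_pf_continuous).
Qed.

Lemma of_spatial_pf_coherent : coherent_map of_spatial_pf.
Proof.
exact: (homeo_coherent_map to_spatial_pfK of_to_spatial_pfK
  of_spatial_pf_continuous to_spatial_pf_continuous).
Qed.

End SoberUnit.

Section AlgebraicUnit.
Context {T : topologicalType} (le : T -> T -> Prop).
Hypothesis HA : algebraic_L_space le.
Let HL : L_space le := proj1 HA.
Let HP : priestley_space le := L_pries HL.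
Local Notation SP := (spatial le).
Local Notation PF := (pfilters SP).

(* The clopen upset with trace O on the spatial part, unique by algebraicity;
   it is set0 when O is not open. *)
Definition trace_ClopUp (O : set SP) : set T :=
  match pselect (exists W, ClopUp le W /\ O = sval @^-1` W) with
  | left h => sval (cid h)
  | right _ => set0
  end.

Lemma trace_ClopUpP (O : set SP) : open O ->
  ClopUp le (trace_ClopUp O) /\ O = sval @^-1` trace_ClopUp O.
Proof.
move=> /open_spatial_trace-/(_ HA) ex; rewrite /trace_ClopUp.
by case: pselect => [h|//]; exact: (svalP (cid h)).
Qed.

Lemma trace_ClopUpE (O : set SP) (W : set T) : open O -> ClopUp le W ->
  O = sval @^-1` W -> trace_ClopUp O = W.
Proof.
move=> oO cW eO; have [cO eO'] := trace_ClopUpP oO.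
apply: (ClopUp_spatial_eq HA cO cW) => y Yy.
have := f_equal (fun S : set SP => S (exist _ y Yy)) eO.
by have := f_equal (fun S : set SP => S (exist _ y Yy)) eO' => /= <- <-.
Qed.

Lemma trace_ClopUp_mono (O O' : set SP) : open O -> open O' -> O `<=` O' ->
  trace_ClopUp O `<=` trace_ClopUp O'.
Proof.
move=> oO oO' OO'; have [cO eO] := trace_ClopUpP oO; have [cO' eO'] := trace_ClopUpP oO'.
apply: (ClopUp_spatial_sub HA cO cO') => y Yy Wy.
have : O (exist _ y Yy) by rewrite eO.
by move/OO'; rewrite {1}eO'.
Qed.

Lemma trace_ClopUpI (O O' : set SP) : open O -> open O' ->
  trace_ClopUp (O `&` O') = trace_ClopUp O `&` trace_ClopUp O'.
Proof.
move=> oO oO'; have [cO eO] := trace_ClopUpP oO; have [cO' eO'] := trace_ClopUpP oO'.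
by apply: trace_ClopUpE; [exact: openI|exact: ClopUpI|rewrite {1}eO {1}eO'].
Qed.

Lemma trace_ClopUpU (O O' : set SP) : open O -> open O' ->
  trace_ClopUp (O `|` O') = trace_ClopUp O `|` trace_ClopUp O'.
Proof.
move=> oO oO'; have [cO eO] := trace_ClopUpP oO; have [cO' eO'] := trace_ClopUpP oO'.
by apply: trace_ClopUpE; [exact: openU|exact: ClopUpU|rewrite {1}eO {1}eO'].
Qed.

Lemma to_pf_spatial_prime_filter (x : T) :
  open_prime_filter [set O : set SP | open O /\ trace_ClopUp O x].
Proof.
have trT : trace_ClopUp setT = setT by apply: trace_ClopUpE; [exact: openT|exact: ClopUpT|].
have tr0 : trace_ClopUp set0 = set0.
  by apply: trace_ClopUpE; [exact: open0|exact: ClopUp0|apply/seteqP; split].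
split.
- by move=> O [].
- by split; [exact: openT|rewrite trT].
- by move=> [_]; rewrite tr0.
- move=> O O' [oO Ox] [oO' O'x]; split; first exact: openI.
  by rewrite trace_ClopUpI.
- by move=> O O' oO' [oO Ox] OO'; split => //; exact: trace_ClopUp_mono OO' _ Ox.
- by move=> O O' oO oO' [_]; rewrite trace_ClopUpU // => -[]; [left|right].
Qed.

Definition to_pf_spatial (x : T) : PF := exist _ _ (to_pf_spatial_prime_filter x).

Lemma to_pf_spatial_le x y : pf_le (to_pf_spatial x) (to_pf_spatial y) <-> le x y.
Proof.
split => [xy|xy O [oO Ox]]; last first.
  by split => //; case: (trace_ClopUpP oO) => -[_ uO] _; exact: uO Ox xy.
apply: contrapT => nxy; have [W [cW uW Wx nWy]] := pries_sep HP nxy.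
have oO : open (sval @^-1` W : set SP) by apply/spatial_openE; exists W; case: cW.
have eW : trace_ClopUp (sval @^-1` W) = W by apply: trace_ClopUpE.
by have [_] := xy (sval @^-1` W) (conj oO (eq_ind_r (@^~ x) Wx eW)); rewrite eW.
Qed.

Lemma to_pf_spatial_inj : injective to_pf_spatial.
Proof.
by move=> x y exy; apply: (pries_anti HP); apply/to_pf_spatial_le; rewrite exy.
Qed.

(* The point representing P lies in [trace_ClopUp U] for each U in P and
   outside [trace_ClopUp N] for each open N not in P. *)
Definition pf_constraint (P : PF) : Type :=
  ({O | sval P O} + {N | open N /\ ~ sval P N})%type.

Definition pf_constraint_set (P : PF) (i : pf_constraint P) : set T :=
  match i with
  | inl U => trace_ClopUp (sval U)
  | inr N => ~` trace_ClopUp (sval N)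
  end.

(* Constraints in P are intersected into O and the others are joined into N,
   which stays outside P by primeness; trace O is not inside trace N. *)
Lemma pf_constraint_fip (P : PF) (s : seq (pf_constraint P)) O N :
  sval P O -> open N -> ~ sval P N ->
  exists x, [/\ trace_ClopUp O x, ~ trace_ClopUp N x &
                 forall i, set_of_list s i -> pf_constraint_set i x].
Proof.
have pP := svalP P; elim: s O N => [|i s IH] O N PO oN nPN.
  have oO := pfilter_open pP PO.
  have nsub : ~ (trace_ClopUp O `<=` trace_ClopUp N).
    move=> ON; apply: nPN; apply: (pfilterS pP oN PO).
    have [_ eO] := trace_ClopUpP oO; have [_ eN] := trace_ClopUpP oN.
    by rewrite eO eN => y /ON.
  apply: contrapT => nex; apply: nsub => x Ox; apply: contrapT => nNx.
  by apply: nex; exists x; split => // i [].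
case: i => [[U PU]|[N' [oN' nPN']]].
  have [x [OUx nNx sx]] := IH _ _ (pfilterI pP PO PU) oN nPN.
  have [oO oU] := (pfilter_open pP PO, pfilter_open pP PU).
  rewrite trace_ClopUpI // in OUx; case: OUx => Ox Ux.
  by exists x; split => // j [<-|sj] //; exact: sx.
have [|x [Ox nNN'x sx]] := IH O (N `|` N') PO (openU oN oN').
  by move/(pfilterU pP oN oN') => [].
rewrite trace_ClopUpU // in nNN'x.
exists x; split => [//|Nx|j [<-|sj] /=]; [|move=> N'x|exact: sx].
- by apply: nNN'x; left.
- by apply: nNN'x; right.
Qed.

Lemma to_pf_spatial_surj (P : PF) : exists x, to_pf_spatial x = P.
Proof.
have pP := svalP P.
have [i|s|x _ Px] := @compact_fip _ setT _ (@pf_constraint_set P) (pries_compact HP).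
- case: i => [[U PU]|[N [oN _]]] /=.
    by case: (trace_ClopUpP (pfilter_open pP PU)) => -[[]].
  by rewrite closedC; case: (trace_ClopUpP oN) => -[[]].
- have [x [_ _ sx]] := pf_constraint_fip s (pfilterT pP) open0 (pfilter0 pP).
  by exists x.
exists x; apply: pfilters_ext; apply/seteqP; split => O.
  move=> [oO Ox]; apply: contrapT => nPO.
  exact: (Px (inr (exist _ O (conj oO nPO)))).
by move=> PO; split; [exact: (pfilter_open pP PO)|exact: (Px (inl (exist _ O PO)))].
Qed.

Lemma to_pf_spatial_continuous : continuous to_pf_spatial.
Proof.
apply/continuousP => Q oQ; apply: open_locally => x Qx.
have [V [W [oV oW [[_ Vx] nWx] sub]]] := oQ _ Qx.
have [[[oTV _] _] _] := trace_ClopUpP oV; have [[[_ clTW] _] _] := trace_ClopUpP oW.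
exists (trace_ClopUp V `&` ~` trace_ClopUp W); split.
- by apply: openI => //; exact: closed_openC.
- by split => // TWx; apply: nWx; split.
- by move=> z [Vz nWz]; apply: sub; split; [split|case].
Qed.

Definition of_pf_spatial (P : PF) : T := sval (cid (to_pf_spatial_surj P)).

Lemma of_pf_spatialK : cancel of_pf_spatial to_pf_spatial.
Proof. by move=> P; exact: (svalP (cid (to_pf_spatial_surj P))). Qed.

Lemma to_pf_spatialK : cancel to_pf_spatial of_pf_spatial.
Proof. by move=> x; apply: to_pf_spatial_inj; rewrite of_pf_spatialK. Qed.

(* A continuous bijection from a compact space onto a Hausdorff space is closed. *)
Lemma of_pf_spatial_continuous : continuous of_pf_spatial.
Proof.
apply/continuous_closedP => C cC.
have -> : of_pf_spatial @^-1` C = to_pf_spatial @` C.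
  apply/seteqP; split => [P CP|_ [x Cx <-]]; last by rewrite /preimage /= to_pf_spatialK.
  by exists (of_pf_spatial P) => //; rewrite of_pf_spatialK.
apply: compact_closed; first by case: (@pfilters_priestley SP) => -[].
apply: continuous_compact; first exact: continuous_subspaceT to_pf_spatial_continuous.
exact: pries_closed_compact HP _ cC.
Qed.

Lemma to_pf_spatial_coherent : coherent_L_morphism le (@pf_le SP) to_pf_spatial.
Proof.
apply: (order_homeo_coherent_L to_pf_spatialK of_pf_spatialK to_pf_spatial_continuous
  of_pf_spatial_continuous) => [x y /to_pf_spatial_le //|P Q PQ].
by apply/to_pf_spatial_le; rewrite !of_pf_spatialK.
Qed.

Lemma of_pf_spatial_coherent : coherent_L_morphism (@pf_le SP) le of_pf_spatial.
Proof.
apply: (order_homeo_coherent_L of_pf_spatialK to_pf_spatialK of_pf_spatial_continuous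
  to_pf_spatial_continuous) => [P Q PQ|x y /to_pf_spatial_le //].
by apply/to_pf_spatial_le; rewrite !of_pf_spatialK.
Qed.

End AlgebraicUnit.

Section AlgebraicNaturality.
Context {T1 T2 : topologicalType} (le1 : T1 -> T1 -> Prop) (le2 : T2 -> T2 -> Prop).
Hypotheses (HA1 : algebraic_L_space le1) (HA2 : algebraic_L_space le2).
Variables (f : T1 -> T2) (Lf : L_morphism le1 le2 f).
Local Notation fs := (spatial_map (proj1 HA1) (proj1 HA2) Lf).
Hypothesis cfs : continuous fs.

Lemma trace_ClopUp_spatial_map (O : set (spatial le2)) : open O ->
  trace_ClopUp (fs @^-1` O) = f @^-1` trace_ClopUp O.
Proof.
move=> oO; have [[cf mf _] [cW eO]] := (Lf, trace_ClopUpP HA2 oO).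
apply: (trace_ClopUpE HA1); first by move/continuousP: cfs; apply.
  split; first exact: preimage_clopen (proj1 cW) cf.
  by move=> a b Wa ab; case: cW => _ uW; exact: uW Wa (mf _ _ ab).
by rewrite {1}eO.
Qed.

Lemma to_pf_spatial_natural (x : T1) :
  to_pf_spatial HA2 (f x) = pf_map cfs (to_pf_spatial HA1 x).
Proof.
apply: pfilters_ext; apply/seteqP; split => O [oO].
  move=> Ofx; split => //; split; first by move/continuousP: cfs; apply.
  by rewrite trace_ClopUp_spatial_map.
by move=> [ofO]; rewrite trace_ClopUp_spatial_map.
Qed.

Lemma of_pf_spatial_natural (P : pfilters (spatial le1)) :
  f (of_pf_spatial HA1 P) = of_pf_spatial HA2 (pf_map cfs P).
Proof.
apply: (@to_pf_spatial_inj _ _ HA2).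
by rewrite to_pf_spatial_natural !of_pf_spatialK.
Qed.

End AlgebraicNaturality.

Lemma of_spatial_pf_natural {Z1 Z2 : topologicalType} (sob1 : sober Z1) (sob2 : sober Z2)
    (g : Z1 -> Z2) (cg : continuous g)
    (HL1 : L_space (@pf_le Z1)) (HL2 : L_space (@pf_le Z2))
    (Lg : L_morphism (@pf_le Z1) (@pf_le Z2) (pf_map cg)) (y : spatial (@pf_le Z1)) :
  g (of_spatial_pf sob1 y) = of_spatial_pf sob2 (spatial_map HL1 HL2 Lg y).
Proof.
rewrite -{2}(to_spatial_pfK sob1 y); move: (of_spatial_pf sob1 y) => z.
have -> : spatial_map HL1 HL2 Lg (to_spatial_pf z) = to_spatial_pf (g z).
  apply: eq_exist; apply: pfilters_ext; apply/seteqP; split => V /=.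
    by case=> oV [].
  by case=> oV gzV; split => //; split => //; move/continuousP: (cg); apply.
by rewrite of_to_spatial_pfK.
Qed.

(** * The equivalence *)

Definition spatial_ob (X : AlgLSpace) : KBSobSpace :=
  @Build_KBSobSpace (spatial (@alg_le X))
    (conj (spatial_compactly_based (alg_ax X)) (spatial_sober (alg_ax X))).

Definition spatial_mor (A B : AlgLSpace) (f : A -> B)
    (p : coherent_L_morphism (@alg_le A) (@alg_le B) f) : spatial_ob A -> spatial_ob B :=
  spatial_map (proj1 (alg_ax A)) (proj1 (alg_ax B)) (proj1 p).

Lemma spatial_mor_coherent (A B : AlgLSpace) (f : A -> B)
    (p : coherent_L_morphism (@alg_le A) (@alg_le B) f) : coherent_map (spatial_mor p).
Proof. exact: spatial_map_coherent (alg_ax A) (alg_ax B). Qed.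

Lemma spatial_mor_id (A : AlgLSpace) (p : coherent_L_morphism (@alg_le A) (@alg_le A) id) :
  spatial_mor p = id.
Proof. by apply: funext => -[y Yy]; apply: eq_exist. Qed.

Lemma spatial_mor_comp (A B E : AlgLSpace) (f : A -> B) (g : B -> E)
    (p : coherent_L_morphism (@alg_le A) (@alg_le B) f)
    (q : coherent_L_morphism (@alg_le B) (@alg_le E) g)
    (r : coherent_L_morphism (@alg_le A) (@alg_le E) (g \o f)) :
  spatial_mor r = spatial_mor q \o spatial_mor p.
Proof. by apply: funext => -[y Yy]; apply: eq_exist. Qed.

Definition spatial_functor : Functor AlgLPries KBSob :=
  @Build_Functor AlgLPries KBSob spatial_ob spatial_mor
    spatial_mor_coherent spatial_mor_id spatial_mor_comp.

Definition pf_ob (Z : KBSobSpace) : AlgLSpace :=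
  @Build_AlgLSpace (pfilters Z) (@pf_le Z) (pfilters_algebraic (proj1 (kb_ax Z))).

Definition pf_mor (A B : KBSobSpace) (g : A -> B) (p : coherent_map g) : pf_ob A -> pf_ob B :=
  pf_map (proj1 p).

Lemma pf_mor_coherent (A B : KBSobSpace) (g : A -> B) (p : coherent_map g) :
  coherent_L_morphism (@alg_le (pf_ob A)) (@alg_le (pf_ob B)) (pf_mor p).
Proof. exact: pf_map_coherent (proj1 p) (proj2 (kb_ax B)) (proj2 p). Qed.

Lemma pf_mor_id (A : KBSobSpace) (p : coherent_map (@id A)) : pf_mor p = id.
Proof.
apply: funext => P; apply: pfilters_ext; apply/seteqP; split => V /=; first by case.
by move=> PV; split => //; exact: (pfilter_open (svalP P) PV).
Qed.

Lemma pf_mor_comp (A B E : KBSobSpace) (f : A -> B) (g : B -> E)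
    (p : coherent_map f) (q : coherent_map g) (r : coherent_map (g \o f)) :
  pf_mor r = pf_mor q \o pf_mor p.
Proof.
apply: funext => P; apply: pfilters_ext; apply/seteqP; split => V /=.
  by case=> oV PV; split => //; split => //; move/continuousP: (proj1 q); apply.
by case=> oV [].
Qed.

Definition pf_functor : Functor KBSob AlgLPries :=
  @Build_Functor KBSob AlgLPries pf_ob pf_mor pf_mor_coherent pf_mor_id pf_mor_comp.

Lemma pf_spatial_iso : nat_iso_to_id spatial_functor pf_functor.
Proof.
exists (fun A => of_pf_spatial (alg_ax A)), (fun A => to_pf_spatial (alg_ax A)).
split; first by move=> A; exact: of_pf_spatial_coherent.
split; first by move=> A; exact: to_pf_spatial_coherent.
split.
  by move=> A; split; apply: funext; [exact: to_pf_spatialK|exact: of_pf_spatialK].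
by move=> A B f p; apply: funext => P; exact: of_pf_spatial_natural.
Qed.

Lemma spatial_pf_iso : nat_iso_to_id pf_functor spatial_functor.
Proof.
exists (fun B => of_spatial_pf (proj2 (kb_ax B))), (fun B => @to_spatial_pf (kb_space B)).
split; first by move=> B; exact: of_spatial_pf_coherent.
split; first by move=> B; exact: (to_spatial_pf_coherent (proj2 (kb_ax B))).
split.
  by move=> B; split; apply: funext; [exact: of_to_spatial_pfK|exact: to_spatial_pfK].
by move=> A B g p; apply: funext => y; exact: of_spatial_pf_natural.
Qed.

Theorem corollary4p12 : cat_equivalent AlgLPries KBSob.
Proof.
by exists spatial_functor, pf_functor; split; [exact: pf_spatial_iso|exact: spatial_pf_iso].
Qed.
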